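(* Let $T=(V,E)$ be a finite undirected tree, let $\mathcal{O}$ be a nonempty proper subset of $V$, and consider the infection model described in the context with source $s\in V\setminus\mathcal{O}$. Then, with probability one, a class $r\in[\mathcal{O}]$ is feasible if and only if $\operatorname{argmin}_{o\in\mathcal{O}}\tau_o\in\partial r$. In particular, almost surely at least one feasible equivalence class exists, and the set of feasible classes forms a star arrangement.
   Context: Infection model: an infection starts at time $0$ at a single node $s$ (the source). For each edge $e\in E$ there is a nonnegative random delay $\tau_e$ with a continuous (atomless) distribution, and the $\tau_e$, $e\in E$, are independent. For $u,v\in V$, $[u,v]$ denotes the set of edges (or vertices, depending on context) of the unique path in $T$ between $u$ and $v$. The infection time of $v\in V$ is $\tau_v:=\sum_{e\in[s,v]}\tau_e$. The observers are the nodes of $\mathcal{O}$. Equivalence classes: for $u,v\in V\setminus\mathcal{O}$, $u\equiv v$ iff $[u,v]\cap\mathcal{O}=\emptyset$ (vertex sets). $[\mathcal{O}]$ is the set of equivalence classes. For $r\in[\mathcal{O}]$, its boundary $\partial r$ is the set of observers adjacent to some node of $r$. For $o\in\mathcal{O}$ and a class $r$, $V_{o;r}:=\{v\in V: [o,v]\cap r=\emptyset\}$, and $T_{o;r}$ is the subtree of $T$ induced on $V_{o;r}$, rooted at $o$. A class $r$ is feasible if for every $o\in\partial r$ and every $o_1,o_2\in V_{o;r}\cap\mathcal{O}$ with $o_1$ an ancestor of $o_2$ in $T_{o;r}$, one has $\tau_{o_1}\le\tau_{o_2}$. A set $R\subset[\mathcal{O}]$ of classes is a star arrangement if $\bigcap_{r\in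 R}\partial r\neq\emptyset$. *)

From HB Require Import structures.
From mathcomp Require Import all_boot all_order all_algebra.
From mathcomp Require Import all_classical all_reals all_analysis.
Set Implicit Arguments. Unset Strict Implicit. Unset Printing Implicit Defensive.
Import Order.TTheory GRing.Theory Num.Theory.
Local Open Scope classical_set_scope.
Local Open Scope ring_scope.

Section Graph.
Variable V : finType.
(* A simple undirected graph is given by its edge set E, each edge being a
   2-element set of vertices. *)
Variable E : {set {set V}}.

Definition adj (x y : V) : bool := ([set x; y]%SET \in E).

(* p is a simple path from u to v (listing the vertices after u), all of
   whose vertices lie in A. *)
Definition spath_in (A : set V) (u v : V) (p : seq V) : Prop :=
  [/\ path adj u p, last u p = v, uniq (u :: p) & forall w, w \in u :: p -> A w].

Definition spath := spath_in setT.

Definition is_tree : Prop :=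
  [/\ forall e, e \in E -> #|e| = 2,
      forall u v, exists p, spath u v p &
      forall u v p q, spath u v p -> spath u v q -> p = q].

Definition pathV (u v : V) : set V := [set w | exists p, spath u v p /\ w \in u :: p].

Definition pathE (u v : V) : set {set V} :=
  [set e | exists p, spath u v p /\ e \in [seq [set x.1; x.2]%SET | x <- zip (u :: p) p]].

Variable O : {set V}.

Definition equivO (u v : V) : Prop :=
  u \notin O /\ v \notin O /\ pathV u v `&` [set w | w \in O] = set0.

Definition is_class (r : set V) : Prop :=
  exists u, u \notin O /\ r = [set v | equivO u v].

Definition boundary (r : set V) : set V :=
  [set o | o \in O /\ exists v, r v /\ adj o v].

Definition Vor (o : V) (r : set V) : set V := [set v | pathV o v `&` r = set0].

Definition ancestor (o : V) (r : set V) (o1 o2 : V) : Prop :=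
  exists p, spath_in (Vor o r) o o2 p /\ o1 \in o :: p.

Variable R : realType.
Variable s : V.

Definition inf_time (t : {set V} -> R) (v : V) : R :=
  \sum_(e in E | `[< pathE s v e >]) t e.

Definition feasible (t : {set V} -> R) (r : set V) : Prop :=
  forall o, boundary r o ->
  forall o1 o2, Vor o r o1 -> o1 \in O -> Vor o r o2 -> o2 \in O ->
    ancestor o r o1 o2 -> inf_time t o1 <= inf_time t o2.

Definition star_arrangement (Rf : set V -> Prop) : Prop :=
  exists o, forall r, Rf r -> boundary r o.

Definition is_argmin (t : {set V} -> R) (o : V) : Prop :=
  o \in O /\ forall o', o' \in O -> o' != o -> inf_time t o < inf_time t o'.

End Graph.

Definition mutually_independent d (T : measurableType d) (R : realType)
    (P : probability T R) (I : finType) (E : {set I}) (X : I -> {RV P >-> R}) : Prop :=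
  forall (J : {set I}) (B : I -> set R), J \subset E ->
    (forall i, measurable (B i)) ->
    P (\bigcap_(i in [set i | i \in J]) (X i @^-1` B i)) =
      (\prod_(i in J) P (X i @^-1` B i))%E.

From HB Require Import structures.
From mathcomp Require Import all_boot all_order all_algebra.
From mathcomp Require Import all_classical all_reals all_analysis.
From mathcomp Require Import lra zify.
Import Order.TTheory GRing.Theory Num.Theory.
Set Implicit Arguments. Unset Strict Implicit. Unset Printing Implicit Defensive.
Local Open Scope classical_set_scope.
Local Open Scope ring_scope.

(* Almost surely the observers' infection times are pairwise distinct, and then
   the statement is deterministic.  Let m be the first infected observer: no other
   observer lies on the path from s to m.  If m is adjacent to the class r and
   o1 is an ancestor of o2 in T_{o;r}, then either o1 lies on the path from s to
   o2, so tau_o1 <= tau_o2 because delays are nonnegative, or o1 lies on the path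
   from o towards s; for o <> m that path leaves o through a vertex of r, which
   forces o1 = o and makes the path from s to o2 pass through o.  Conversely, if
   m is not adjacent to r, the first observer o met on the path from r to m is
   adjacent to r and is an ancestor of m in T_{o;r}, yet tau_o > tau_m.  The class
   of s is adjacent to m, whence existence and the star arrangement.

   Ties have probability zero: for a <> b one of the two paths from s, say the
   one to b, has an edge e off the other, so tau_b - tau_a = tau_e + sum_f c_f tau_f
   over the other edges f.  Discretise the other delays on a fine grid; on each
   grid box tau_e must fall in a short interval, whose probability is uniformly
   small because tau_e has no atoms, and by independence the box probabilities
   add up to at most that bound. *)

Section TreePaths.
Variables (V : finType) (E : {set {set V}}).
Hypothesis tree : is_tree E.
Local Notation adj := (adj E).

Lemma adjC x y : adj x y = adj y x.
Proof. by rewrite /adj finset.setUC. Qed.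

Lemma adj_neq x y : adj x y -> x != y.
Proof.
case: tree => edge2 _ _ /edge2; apply: contra_eqN => /eqP ->.
by rewrite finset.setUid cards1.
Qed.

Lemma spath_exists u v : exists p, spath E u v p.
Proof. by case: tree. Qed.

Definition tpath u v : seq V := sval (cid (spath_exists u v)).

Lemma tpath_spath u v : spath E u v (tpath u v).
Proof. exact: svalP (cid (spath_exists u v)). Qed.

Lemma spath_tpath u v p : spath E u v p -> p = tpath u v.
Proof. by case: tree => _ _ uniq_spath /uniq_spath; apply; exact: tpath_spath. Qed.

Lemma tpath_path u v : path adj u (tpath u v).
Proof. by case: (tpath_spath u v). Qed.

Lemma tpath_last u v : last u (tpath u v) = v.
Proof. by case: (tpath_spath u v). Qed.

Lemma tpath_uniq u v : uniq (u :: tpath u v).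
Proof. by case: (tpath_spath u v). Qed.

Lemma tpathE u v p : path adj u p -> last u p = v -> uniq (u :: p) -> tpath u v = p.
Proof. by move=> *; apply/esym/spath_tpath. Qed.

Lemma mem_tpath_last u v : v \in u :: tpath u v.
Proof. by rewrite -[X in X \in _](tpath_last u v) mem_last. Qed.

Lemma spath_in_tpath (A : set V) u v p : spath_in E A u v p -> p = tpath u v.
Proof. by case=> *; apply/esym/tpathE. Qed.

Lemma pathV_tpath u v w : pathV E u v w <-> w \in u :: tpath u v.
Proof.
split=> [[p [/spath_tpath -> //]]|w_uv].
by exists (tpath u v); split=> //; exact: tpath_spath.
Qed.

Lemma tpath_adj x y : adj x y -> tpath x y = [:: y].
Proof. by move=> xy; apply: tpathE => /=; rewrite ?xy ?inE ?andbT ?adj_neq. Qed.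

Lemma tpath_cat u v w : w \in u :: tpath u v -> tpath u v = tpath u w ++ tpath w v.
Proof.
move=> w_uv; have := tpath_path u v; have := tpath_last u v; have := tpath_uniq u v.
case/splitPl: w_uv => p1 p2 p1_w.
rewrite -cat_cons cat_uniq last_cat cat_path p1_w => /and3P[uniq1 dis uniq2] p2_v.
case/andP=> path1 path2; rewrite (tpathE path1 p1_w uniq1) (tpathE path2 p2_v) //=.
rewrite uniq2 andbT; apply: contra dis => w_p2.
by apply/hasP; exists w; rewrite // -p1_w mem_last.
Qed.

Lemma tpath_rev u v : v :: tpath v u = rev (u :: tpath u v).
Proof.
have rev_uv : rev (u :: tpath u v) = v :: rev (belast u (tpath u v)).
  by rewrite lastI rev_rcons tpath_last.
rewrite rev_uv; congr (_ :: _); apply: tpathE.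
- rewrite -[in path _ v](tpath_last u v) rev_path (@eq_path _ _ adj).
    exact: tpath_path.
  by move=> x y; exact: adjC.
- by rewrite -(last_cons v v) -rev_uv rev_cons last_rcons.
- by rewrite -rev_uv rev_uniq tpath_uniq.
Qed.

Lemma mem_tpathC u v w : (w \in v :: tpath v u) = (w \in u :: tpath u v).
Proof. by rewrite tpath_rev mem_rev. Qed.

Lemma mem_tpath_sub u v w z :
  w \in u :: tpath u v -> z \in u :: tpath u w -> z \in u :: tpath u v.
Proof. by move=> w_uv; rewrite (tpath_cat w_uv) -cat_cons mem_cat => ->. Qed.

Lemma mem_tpath_split a b c w :
  w \in a :: tpath a b -> (w \in a :: tpath a c) || (w \in c :: tpath c b).
Proof.
set p := tpath a c ++ tpath c b.
have p_path : path adj a p by rewrite cat_path tpath_path tpath_last tpath_path.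
have p_last : last a p = b by rewrite last_cat !tpath_last.
move: p_last; case: (shortenP p_path) => q q_path q_uniq q_sub q_last.
rewrite (tpathE q_path q_last q_uniq) inE => /predU1P[->|/q_sub]; first by rewrite mem_head.
by rewrite mem_cat => /orP[w_ac|w_cb]; rewrite ?inE ?w_ac ?w_cb ?orbT.
Qed.

Lemma tpath_join a m b :
    (forall w, w \in a :: tpath a m -> w \in m :: tpath m b -> w = m) ->
  tpath a b = tpath a m ++ tpath m b.
Proof.
move=> meet; apply: tpathE.
- by rewrite cat_path tpath_path tpath_last tpath_path.
- by rewrite last_cat !tpath_last.
rewrite -cat_cons cat_uniq tpath_uniq /=.
have /= /andP[m_mb uniq_mb] := tpath_uniq m b; rewrite uniq_mb andbT.
apply/hasPn => x x_mb; apply/negP => x_am.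
have x_m : x = m by apply: meet; rewrite // inE x_mb orbT.
by move: x_mb; rewrite x_m (negbTE m_mb).
Qed.

Lemma tpath_prefix u v w z :
  w \in u :: tpath u v -> z \in w :: tpath w v -> tpath u z = tpath u w ++ tpath w z.
Proof.
move=> w_uv z_wv; apply: tpathE.
- by rewrite cat_path tpath_path tpath_last tpath_path.
- by rewrite last_cat !tpath_last.
have := tpath_uniq u v; rewrite (tpath_cat w_uv) (tpath_cat z_wv) catA -cat_cons.
by rewrite cat_uniq => /andP[].
Qed.

Lemma tpath_rcons u v : u != v ->
  exists y, [/\ adj y v, tpath u v = rcons (tpath u y) v & v \notin u :: tpath u y].
Proof.
move=> uv; have := tpath_path u v; have := tpath_last u v; have := tpath_uniq u v.
case/lastP: (tpath u v) => [_ /= vu|q z]; first by rewrite vu eqxx in uv.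
rewrite last_rcons -rcons_cons rcons_uniq rcons_path => /andP[v_q uniq_q] <-.
case/andP=> q_path q_adj; exists (last u q).
by rewrite (tpathE q_path erefl uniq_q).
Qed.

Lemma tpath_through_neighbour s o y z : adj o y -> o \notin s :: tpath s y ->
  z \in s :: tpath s o -> z != o -> y \in o :: tpath o z.
Proof.
move=> oy o_sy; rewrite -mem_tpathC => z_os zo.
have tpath_os : tpath o s = y :: tpath y s.
  rewrite (@tpath_join o y s) (tpath_adj oy) // => w.
  rewrite mem_seq2 => /orP[/eqP->|/eqP-> //].
  by rewrite mem_tpathC (negbTE o_sy).
have y_os : y \in o :: tpath o s by rewrite tpath_os !inE eqxx orbT.
have z_ys : z \in y :: tpath y s by move: z_os; rewrite tpath_os inE (negbTE zo).
by rewrite (tpath_prefix y_os z_ys) -cat_cons mem_cat mem_tpath_last.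
Qed.

Definition pedges (x : V) (p : seq V) : seq {set V} :=
  [seq [set z.1; z.2]%SET | z <- zip (x :: p) p].

Lemma pedges_cons x y p : pedges x (y :: p) = [set x; y]%SET :: pedges y p.
Proof. by []. Qed.

Lemma pedges_cat x p q : pedges x (p ++ q) = pedges x p ++ pedges (last x p) q.
Proof. by elim: p x => [|y p IHp] x //; rewrite cat_cons !pedges_cons IHp. Qed.

Lemma pedges_vertex x p e z : e \in pedges x p -> z \in e -> z \in x :: p.
Proof.
elim: p x => [|y p IHp] x //; rewrite pedges_cons inE => /predU1P[->|/IHp e_yp].
  by rewrite !inE => /orP[] ->; rewrite ?orbT.
by move=> /e_yp z_yp; rewrite inE z_yp orbT.
Qed.

Lemma pathE_tpath u v e : pathE E u v e <-> e \in pedges u (tpath u v).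
Proof.
split=> [[p [/spath_tpath -> //]]|e_uv].
by exists (tpath u v); split=> //; exact: tpath_spath.
Qed.

Lemma pedges_tpath_sub u v w e : w \in u :: tpath u v ->
  e \in pedges u (tpath u w) -> e \in pedges u (tpath u v).
Proof. by move=> w_uv e_uw; rewrite (tpath_cat w_uv) pedges_cat mem_cat e_uw. Qed.

Lemma tpath_new_edge s a b : b \notin s :: tpath s a ->
  exists e, [/\ e \in E, e \in pedges s (tpath s b) & e \notin pedges s (tpath s a)].
Proof.
move=> b_sa; have sb : s != b by apply: contraNneq b_sa => <-; exact: mem_head.
have [y [yb tpath_sb _]] := tpath_rcons sb.
exists [set y; b]%SET; split=> //.
  by rewrite tpath_sb -cats1 pedges_cat tpath_last mem_cat pedges_cons inE eqxx orbT.
by apply: contra b_sa => /pedges_vertex; apply; rewrite !inE eqxx orbT.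
Qed.

Lemma tpath_notin_either s a b :
  a != b -> b \notin s :: tpath s a \/ a \notin s :: tpath s b.
Proof.
move=> ab; apply/orP; rewrite -negb_and; apply: contra ab => /andP[b_sa a_sb].
have := congr1 size (tpath_cat a_sb); rewrite (tpath_cat b_sa) !size_cat.
have := tpath_last a b; case: (tpath a b) => [/= -> //|] z p _.
by rewrite /=; lia.
Qed.

Section InfectionTimes.
Variables (R : realType) (s : V) (t : {set V} -> R).

Lemma inf_time_tpath v : inf_time E s t v = \sum_(e in E | e \in pedges s (tpath s v)) t e.
Proof.
by apply: eq_bigl => e; case: (e \in E) => //=; apply/asboolP/idP => /pathE_tpath.
Qed.

Lemma inf_time_indicator v :
  inf_time E s t v = \sum_(e in E) (e \in pedges s (tpath s v))%:R * t e.
Proof.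
rewrite inf_time_tpath big_mkcondr; apply: eq_bigr => e _.
by case: ifP; rewrite ?mul1r ?mul0r.
Qed.

Lemma inf_time_mono v w : (forall e, e \in E -> 0 <= t e) ->
  w \in s :: tpath s v -> inf_time E s t w <= inf_time E s t v.
Proof.
move=> t_ge0 w_sv; rewrite !inf_time_tpath !big_mkcondr /=; apply: ler_sum => e eE.
case: ifP => [/(pedges_tpath_sub w_sv) -> //|_]; case: ifP => // _; exact: t_ge0.
Qed.

End InfectionTimes.

Section Classes.
Variable O : {set V}.

Lemma equivO_tpath u v : equivO E O u v <-> (forall w, w \in u :: tpath u v -> w \notin O).
Proof.
split=> [[_ [_ path_free]] w w_uv|free]; last first.
  split; first exact/free/mem_head.
  split; first exact/free/mem_tpath_last.
  by apply/seteqP; split=> // w [/pathV_tpath /free /negP].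
apply/negP => wO; have : (pathV E u v `&` [set w | w \in O]) w by split=> //; exact/pathV_tpath.
by rewrite path_free.
Qed.

Lemma equivO_sym u v : equivO E O u v -> equivO E O v u.
Proof. by move/equivO_tpath => free; apply/equivO_tpath => w; rewrite mem_tpathC; exact: free. Qed.

Lemma equivO_trans u v z : equivO E O u v -> equivO E O v z -> equivO E O u z.
Proof.
move/equivO_tpath => free_uv /equivO_tpath free_vz; apply/equivO_tpath => w.
by case/(mem_tpath_split v)/orP; [exact: free_uv|exact: free_vz].
Qed.

Lemma equivO_prefix u v w : equivO E O u v -> w \in u :: tpath u v -> equivO E O u w.
Proof.
move/equivO_tpath => free w_uv; apply/equivO_tpath => z z_uw.
exact/free/(mem_tpath_sub w_uv).
Qed.

Lemma equivO_between u x y w : equivO E O u x -> equivO E O u y ->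
  w \in x :: tpath x y -> equivO E O u w.
Proof.
move=> ux uy w_xy; apply: (equivO_trans ux); apply: (equivO_prefix _ w_xy).
exact: equivO_trans (equivO_sym ux) uy.
Qed.

Lemma Vor_tpath o (r : set V) z :
  Vor E o r z <-> (forall w, w \in o :: tpath o z -> ~ r w).
Proof.
split=> [Voz w w_oz rw|free].
  have : (pathV E o z `&` r) w by split=> //; exact/pathV_tpath.
  by rewrite [_ `&` _]Voz.
by apply/seteqP; split=> // w [/pathV_tpath /free].
Qed.

Lemma first_observer_on_tpath u m : m \in O -> exists o,
  [/\ o \in u :: tpath u m, o \in O & forall w, w \in u :: tpath u o -> w \in O -> w = o].
Proof.
move=> mO; pose on_path z := (z \in u :: tpath u m) && (z \in O).
have m_on : on_path m by rewrite /on_path mem_tpath_last mO.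
case: (@arg_minnP _ m on_path (fun z => size (tpath u z)) m_on) => o /andP[on_um oO] o_min.
exists o; split=> // w w_uo wO.
have := o_min w; rewrite /on_path (mem_tpath_sub on_um w_uo) wO (tpath_cat w_uo) size_cat.
rewrite -[leqRHS]addn0 leq_add2l leqn0 => /(_ isT) /nilP wo.
by have := tpath_last w o; rewrite wo.
Qed.

End Classes.

Section Feasibility.
Variables (O : {set V}) (s : V) (R : realType) (t : {set V} -> R).
Hypotheses (sO : s \notin O) (t_ge0 : forall e, e \in E -> 0 <= t e).
Hypothesis times_inj : {in O &, injective (inf_time E s t)}.
Local Notation it := (inf_time E s t).
Local Notation cl u := [set v | equivO E O u v].

Variable m : V.
Hypotheses (mO : m \in O) (m_min : forall o, o \in O -> it m <= it o).

Lemma observer_on_tpath_argmin w : w \in s :: tpath s m -> w \in O -> w = m.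
Proof.
move=> w_sm wO; apply: times_inj => //; apply/eqP.
by rewrite eq_le (inf_time_mono t_ge0 w_sm) m_min.
Qed.

Lemma inf_time_argmin_lt o : o \in O -> o != m -> it m < it o.
Proof.
move=> oO om; rewrite lt_neqAle m_min // andbT.
by apply: contra om => /eqP /times_inj -> //.
Qed.

Lemma feasible_of_boundary u : boundary E O (cl u) m -> feasible E O s t (cl u).
Proof.
case=> _ [x [ux mx]] o [oO [y [uy oy]]] o1 o2 /Vor_tpath o1_free o1O /Vor_tpath o2_free o2O.
case=> p [/spath_in_tpath -> o1_oo2].
have /orP[|o1_so2] := mem_tpath_split s o1_oo2; last exact: inf_time_mono.
rewrite mem_tpathC => o1_so.
have [om_eq | om] := eqVneq o m.
  by move: o1_so; rewrite om_eq => /observer_on_tpath_argmin /(_ o1O) ->; exact: m_min o2O.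
have o_sy : o \notin s :: tpath s y.
  apply/negP => /(mem_tpath_split m)/orP[/observer_on_tpath_argmin/(_ oO)/eqP|].
    by rewrite (negbTE om).
  case/(mem_tpath_split x)/orP => [|o_xy].
    rewrite tpath_adj // !inE => /orP[/eqP om'|/eqP ox]; first by rewrite om' eqxx in om.
    by move: ux; rewrite -ox => -[_ []]; rewrite oO.
  by have [_ []] := equivO_between ux uy o_xy; rewrite oO.
have y_before := tpath_through_neighbour oy o_sy.
have -> : o1 = o.
  have [//|o1o] := eqVneq o1 o.
  by case: (o1_free y (y_before o1 o1_so o1o) uy).
have tpath_so2 : tpath s o2 = tpath s o ++ tpath o o2.
  apply: tpath_join => w w_so w_oo2; have [//|wo] := eqVneq w o.
  by case: (o2_free y (mem_tpath_sub w_oo2 (y_before w w_so wo)) uy).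
by apply: inf_time_mono; rewrite // tpath_so2 -cat_cons mem_cat mem_tpath_last.
Qed.

Lemma boundary_of_feasible u : u \notin O -> feasible E O s t (cl u) -> boundary E O (cl u) m.
Proof.
move=> uO feas; apply: contrapT => not_bd.
case: (first_observer_on_tpath u mO) => o [on_um oO o_first].
have uo : u != o by apply: contraNneq uO => ->.
have [y [yo tpath_uo o_uy]] := tpath_rcons uo.
have uy : equivO E O u y.
  apply/equivO_tpath => w w_uy; apply: contra o_uy => wO.
  by rewrite -(o_first w) // tpath_uo -rcons_cons mem_rcons inE w_uy orbT.
have bd_o : boundary E O (cl u) o by split=> //; exists y; rewrite adjC.
have om : o != m by apply: contra_not_neq not_bd => <-.
have free z : z \in o :: tpath o m -> Vor E o (cl u) z.
  move=> z_om; apply/Vor_tpath => w w_oz /equivO_tpath u_free.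
  have o_uw : o \in u :: tpath u w.
    by rewrite (tpath_prefix on_um (mem_tpath_sub z_om w_oz)) -cat_cons mem_cat mem_tpath_last.
  by have := u_free o o_uw; rewrite oO.
have anc : ancestor E o (cl u) o m.
  exists (tpath o m); split; last exact: mem_head.
  by split; [exact: tpath_path|exact: tpath_last|exact: tpath_uniq|exact: free].
have := feas o bd_o o m (free o (mem_head _ _)) oO (free m (mem_tpath_last _ _)) mO anc.
by rewrite leNgt inf_time_argmin_lt.
Qed.

Lemma boundary_source_class : boundary E O (cl s) m.
Proof.
have sm : s != m by apply: contraNneq sO => ->.
have [y [ym tpath_sm m_sy]] := tpath_rcons sm.
split=> //; exists y; split; last by rewrite adjC.
apply/equivO_tpath => w w_sy; apply: contra m_sy => wO.
have w_sm : w \in s :: tpath s m by rewrite tpath_sm -rcons_cons mem_rcons inE w_sy orbT.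
by rewrite -(observer_on_tpath_argmin w_sm wO).
Qed.

End Feasibility.

Lemma feasible_iff_boundary_argmin (O : {set V}) s (R : realType) (t : {set V} -> R) :
  s \notin O -> (forall e, e \in E -> 0 <= t e) ->
  {in O &, injective (inf_time E s t)} -> O != finset.set0 ->
  exists2 ostar, is_argmin E O s t ostar &
    [/\ forall r, is_class E O r -> (feasible E O s t r <-> boundary E O r ostar),
        exists r, is_class E O r /\ feasible E O s t r &
        star_arrangement E O (fun r => is_class E O r /\ feasible E O s t r)].
Proof.
move=> sO t_ge0 times_inj /set0Pn[v0 v0O].
have [m mO m_min] := arg_minP (inf_time E s t) v0O.
have feasibleE r : is_class E O r -> feasible E O s t r <-> boundary E O r m.
  case=> u [uO ->]; split; first exact: boundary_of_feasible.
  exact: feasible_of_boundary.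
exists m.
  by split=> // o; exact: (@inf_time_argmin_lt O s R t times_inj m mO m_min o).
split; [exact: feasibleE| |by exists m => r [r_cl /(feasibleE r r_cl)]].
have cl_s : is_class E O [set v | equivO E O s v] by exists s.
exists [set v | equivO E O s v]; split=> //; apply/(feasibleE _ cl_s).
exact: (@boundary_source_class O s R t sO t_ge0 times_inj m mO m_min).
Qed.

End TreePaths.

Section GridArithmetic.
Variable R : realType.

Definition grid_cell (a del x : R) : nat := Num.truncn ((x - a) / del).

Lemma grid_cellP (a del x : R) N : 0 < del -> a <= x < a + N%:R * del ->
  [/\ (grid_cell a del x < N)%N, a + (grid_cell a del x)%:R * del <= x
     & x < a + (grid_cell a del x).+1%:R * del].
Proof.
move=> del_gt0 /andP[ax xN].
have xa_ge0 : 0 <= (x - a) / del by apply: divr_ge0; lra.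
have /andP[] := truncn_itv xa_ge0; rewrite ler_pdivlMr // ltr_pdivrMr // => lo hi.
split; [|rewrite /grid_cell; lra..].
by rewrite /grid_cell truncn_lt_nat // ltr_pdivrMr //; lra.
Qed.

Lemma sum_mul_dist_le (I : finType) (A : {pred I}) (c x y : I -> R) (del : R) :
  (forall i, i \in A -> `|x i - y i| <= del) ->
  `|\sum_(i in A) c i * x i - \sum_(i in A) c i * y i| <= (\sum_(i in A) `|c i|) * del.
Proof.
move=> xy; rewrite -sumrB mulr_suml; apply: le_trans (ler_norm_sum _ _ _) _.
by apply: ler_sum => i iA; rewrite -mulrBr normrM ler_wpM2l // xy.
Qed.

End GridArithmetic.

Section ProbabilityFacts.
Context d (T : measurableType d) (R : realType) (P : probability T R).

Lemma probability_fineE (A : set T) : measurable A -> P A = (fine (P A))%:E.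
Proof. by move=> mA; rewrite fineK // fin_num_measure. Qed.

Lemma prob_nonincreasing_small (F : nat -> set T) :
  (forall n, measurable (F n)) -> {homo F : n m / (n <= m)%N >-> (m <= n)%O} ->
  P (\bigcap_n F n) = 0%E -> forall eps : R, 0 < eps -> exists n, (P (F n) < eps%:E)%E.
Proof.
move=> mF F_dec F0 eps eps0.
have : (P \o F) n @[n --> \oo] --> 0%E.
  have mcap : measurable (\bigcap_n F n) by exact: bigcapT_measurable.
  have F0_fin : (P (F 0%N) < +oo)%E := le_lt_trans (probability_le1 P (mF 0%N)) (ltry 1).
  by rewrite -F0; exact: (@nonincreasing_cvg_mu _ T R P F F0_fin mF mcap F_dec).
case/fine_cvgP => _ /cvgr_lt /(_ eps eps0) [N _ PF_lt].
by exists N; rewrite probability_fineE // lte_fin; exact: PF_lt N (leqnn N).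
Qed.

Lemma prob_shrinking_interval_small (X : {RV P >-> R}) x :
  P (X @^-1` [set x]) = 0%E -> forall eps : R, 0 < eps ->
  exists2 eta : R, 0 < eta & (P (X @^-1` `[(x - eta)%R, (x + eta)%R]) < eps%:E)%E.
Proof.
move=> atom_x eps eps0.
pose F n := X @^-1` `[x - n.+1%:R^-1, x + n.+1%:R^-1].
have mF n : measurable (F n) by apply: measurable_funPTI; exact: measurable_itv.
have F_dec : {homo F : n m / (n <= m)%N >-> (m <= n)%O}.
  move=> n m nm; rewrite subsetEset => y; rewrite /F /= !in_itv /=.
  have : m.+1%:R^-1 <= n.+1%:R^-1 :> R by rewrite lef_pV2 ?posrE // ler_nat ltnS.
  by move: (m.+1%:R^-1) (n.+1%:R^-1) => u v uv /andP[? ?]; apply/andP; split; lra.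
have F_cap : \bigcap_n F n = X @^-1` [set x].
  apply/seteqP; split=> [y Fy|y /= Xy n _]; last first.
    have : 0 < n.+1%:R^-1 :> R by rewrite invr_gt0.
    by rewrite /F /= in_itv /= Xy; move: (n.+1%:R^-1) => u u0; apply/andP; split; lra.
  apply/eqP; apply: contraT => Xy_neq.
  have dist_gt0 : 0 < `|X y - x| by rewrite normr_gt0 subr_eq0.
  have [N _ /(_ N (leqnn N)) N_lt] := near_infty_natSinv_lt (PosNum dist_gt0).
  suff : `|X y - x| <= N.+1%:R^-1 by rewrite leNgt N_lt.
  have := Fy N I; rewrite /F /= in_itv /= ler_norml.
  by move: (N.+1%:R^-1) => u /andP[? ?]; apply/andP; split; lra.
have F_cap0 : P (\bigcap_n F n) = 0%E by rewrite F_cap.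
have [n Fn_small] := prob_nonincreasing_small mF F_dec F_cap0 eps0.
by exists n.+1%:R^-1; rewrite ?invr_gt0.
Qed.

Lemma prob_tail_small (X : {RV P >-> R}) (eps : R) : 0 < eps ->
  exists2 M : R, 0 < M & (P (X @^-1` (~` `](- M)%R, M[)) < eps%:E)%E.
Proof.
move=> eps0.
pose F n := X @^-1` (~` `]- n.+1%:R, n.+1%:R[ : set R).
have mF n : measurable (F n).
  by apply: measurable_funPTI; apply: measurableC; exact: measurable_itv.
have F_dec : {homo F : n m / (n <= m)%N >-> (m <= n)%O}.
  move=> n m nm; rewrite subsetEset => y; rewrite /F /= !in_itv /= => Fn_out Fm_in.
  have : n.+1%:R <= m.+1%:R :> R by rewrite ler_nat ltnS.
  by move: Fm_in => /andP[? ?] ?; apply: Fn_out; apply/andP; split; lra.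
have F_cap : \bigcap_n F n = set0.
  apply/seteqP; split=> // y Fy; apply: (Fy (Num.truncn `|X y|) I).
  by rewrite /= in_itv /= -ltr_norml truncnS_gt.
have F_cap0 : P (\bigcap_n F n) = 0%E by rewrite F_cap measure0.
have [n Fn_small] := prob_nonincreasing_small mF F_dec F_cap0 eps0.
by exists n.+1%:R.
Qed.

Lemma prob_tails_small (I : finType) (A : {pred I}) (X : I -> {RV P >-> R}) (eps : R) :
  0 < eps -> exists2 M : R, 0 < M &
    forall i, i \in A -> (P (X i @^-1` (~` `](- M)%R, M[)) <= eps%:E)%E.
Proof.
move=> eps0.
have /choice[M M_spec] : forall i, exists M : R,
    0 < M /\ (P (X i @^-1` (~` `](- M)%R, M[)) < eps%:E)%E.
  by move=> i; have [M M0 tail] := prob_tail_small (X i) eps0; exists M.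
pose Mmax := \big[Num.max/1]_(i in A) M i.
have one_le : 1 <= Mmax := bigmax_ge_id _ _ _ _.
exists Mmax => [|i iA]; first lra.
have M_le : M i <= Mmax by apply: le_bigmax_cond.
apply: le_trans (ltW (M_spec i).2); apply: le_measure; rewrite ?inE.
- by apply: measurable_funPTI; apply: measurableC; exact: measurable_itv.
- by apply: measurable_funPTI; apply: measurableC; exact: measurable_itv.
move=> w /=; rewrite !in_itv /= => out_Mmax in_M; apply: out_Mmax.
by move: in_M => /andP[? ?]; apply/andP; split; lra.
Qed.

Lemma prob_interval_unif_small (X : {RV P >-> R}) :
  (forall x, P (X @^-1` [set x]) = 0%E) -> forall eps : R, 0 < eps ->
  exists2 del : R, 0 < del & forall a, (P (X @^-1` `[(a - del)%R, (a + del)%R]) <= eps%:E)%E.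
Proof.
move=> atomless eps eps0.
have [M M0 tail] := prob_tail_small X eps0.
have /choice[eta eta_spec] : forall x : R, exists eta : R,
    0 < eta /\ (P (X @^-1` `[(x - eta)%R, (x + eta)%R]) < eps%:E)%E.
  by move=> x; have [e e0 small] := prob_shrinking_interval_small (atomless x) eps0; exists e.
have eta_gt0 x : 0 < eta x / 2 by rewrite divr_gt0 // (eta_spec x).1.
have : cover_compact `[- M - 1, M + 1] by rewrite -compact_cover; exact: segment_compact.
case/(_ R setT (fun x => @ball _ R^o x (eta x / 2))) => [x _|y _|D _ cover].
- exact: ball_open.
- by exists y => //; apply: ballxx.
pose del := \big[Num.min/1]_(x <- finmap.enum_fset D) (eta x / 2).
have del_gt0 : 0 < del by apply: lt_bigmin.
have del_le1 : del <= 1 := bigmin_le_id _ _ _ _.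
exists del => // a.
have [a_in|a_out] := boolP (a \in `[- M - 1, M + 1]).
- have [x /= xD a_near] := cover a a_in.
  have del_le : del <= eta x / 2 by apply: ge_bigmin_seq.
  apply: le_trans (ltW (eta_spec x).2); apply: le_measure; rewrite ?inE.
  + by apply: measurable_funPTI; exact: measurable_itv.
  + by apply: measurable_funPTI; exact: measurable_itv.
  move: a_near; rewrite -ball_normE /ball_ /= ltr_norml => /andP[? ?] y.
  by rewrite /= !in_itv /= => /andP[? ?]; apply/andP; split; lra.
- apply: le_trans (ltW tail); apply: le_measure; rewrite ?inE.
  + by apply: measurable_funPTI; exact: measurable_itv.
  + by apply: measurable_funPTI; apply: measurableC; exact: measurable_itv.
  move=> y; rewrite /= !in_itv /= => /andP[? ?] /andP[? ?].
  by move: a_out; rewrite in_itv /= => /negP; apply; apply/andP; split; lra.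
Qed.

Lemma prob_bigsetU_le (I : Type) (r : seq I) (Q : pred I) (A : I -> set T) :
  (forall i, measurable (A i)) ->
  (P (\big[setU/set0]_(i <- r | Q i) A i) <= \sum_(i <- r | Q i) P (A i))%E.
Proof.
move=> mA; elim: r => [|i r IHr]; first by rewrite !big_nil measure0.
rewrite !big_cons; case: (Q i) => //.
apply: le_trans (measureU2 _ _ _) (leeD2l _ IHr) => //.
exact: bigsetU_measurable.
Qed.

Lemma sum_prob_cells_le1 (X : {RV P >-> R}) (a del : R) N : 0 < del ->
  \sum_(j < N) fine (P (X @^-1` `[a + j%:R * del, a + j.+1%:R * del[)) <= 1.
Proof.
move=> del_gt0.
have mcell (b c : R) : measurable (X @^-1` `[b, c[).
  by apply: measurable_funPTI; exact: measurable_itv.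
suff -> : \sum_(j < N) fine (P (X @^-1` `[a + j%:R * del, a + j.+1%:R * del[))
    = fine (P (X @^-1` `[a, a + N%:R * del[)).
  by rewrite -lee_fin -probability_fineE //; exact: probability_le1.
elim: N => [|N IHN].
  rewrite big_ord0 mul0r addr0.
  suff -> : X @^-1` `[a, a[ = set0 by rewrite measure0.
  by apply/seteqP; split=> // y; rewrite /= in_itv /= => /andP[? ?]; lra.
rewrite big_ord_recr /= IHN -fineD ?fin_num_measure //; congr fine.
have : 0 <= N%:R * del <= N.+1%:R * del.
  by rewrite mulr_ge0 ?ler_pM2r ?ler_nat //= ltW.
move: (N%:R * del) (N.+1%:R * del) => u v /andP[u_ge0 uv].
rewrite -measureU //; last first.
  by apply/seteqP; split=> // y [] /=; rewrite !in_itv /= => /andP[? ?] /andP[? ?]; lra.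
congr (P _); apply/seteqP; split=> y /=; rewrite !in_itv /=.
  by case=> /andP[? ?]; apply/andP; split; lra.
by case/andP=> ? ?; have [?|?] := ltP (X y) (a + u); [left|right]; apply/andP; split; lra.
Qed.

End ProbabilityFacts.

Section IndependentFamily.
Context d (T : measurableType d) (R : realType) (P : probability T R).
Variables (I : finType) (F : {set I}) (X : I -> {RV P >-> R}).
Hypothesis indep : mutually_independent F X.
Variable e : I.
Hypothesis eF : e \in F.
Local Notation G := (F :\ e).
(* Cell assignments of the coordinates in G, pinned to ord0 elsewhere so that
   each box is counted once. *)
Local Notation grid N := (family (fun i (j : 'I_N.+1) => (i \in G) || (j == ord0))).

Lemma prob_grid_le N (C : nat -> set R) (B : {ffun I -> 'I_N.+1} -> set R) (eps : R) :
  0 <= eps -> (forall j, measurable (C j)) -> (forall k, measurable (B k)) ->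
  (forall i, \sum_(j < N.+1) fine (P (X i @^-1` C j)) <= 1) ->
  (forall k, (P (X e @^-1` B k) <= eps%:E)%E) ->
  (P (\big[setU/set0]_(k in grid N)
        \bigcap_(i in [set i | i \in F]) X i @^-1` (if i == e then B k else C (k i)))
   <= eps%:E)%E.
Proof.
(* Independence factorises each box, and the sum over all cell assignments of
   the products is a product of per-coordinate sums of cell probabilities. *)
move=> eps_ge0 mC mB cells_le1 Be_le.
pose p i (j : nat) := fine (P (X i @^-1` C j)).
have mbox k i : measurable (if i == e then B k else C (k i)) by case: (i == e).
have box_le k : (P (\bigcap_(i in [set i | i \in F]) X i @^-1` (if i == e then B k else C (k i)))
    <= (eps * \prod_(i in G) p i (k i))%:E)%E.
  rewrite (indep (subxx F) (mbox k)) (bigD1 e) //= eqxx.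
  have -> : (\prod_(i in F | i != e) P (X i @^-1` (if i == e then B k else C (k i))))%E =
      (\prod_(i in G) p i (k i))%:E.
    rewrite -prodEFin [RHS](eq_bigl (fun i => (i \in F) && (i != e))); last first.
      by move=> i; rewrite in_setD1 andbC.
    apply: eq_bigr => i /andP[_ /negbTE ->]; rewrite probability_fineE //.
    exact: measurable_funPTI.
  rewrite probability_fineE; last exact: measurable_funPTI.
  rewrite -EFinM lee_fin ler_wpM2r //.
    by apply: prodr_ge0 => i _; exact/fine_ge0/measure_ge0.
  by rewrite -lee_fin -probability_fineE //; exact: measurable_funPTI.
apply: le_trans (prob_bigsetU_le _ _ _ _) _ => [k|].
  apply: fin_bigcap_measurable => [|i _]; first exact: finite_finset.
  exact: measurable_funPTI.
apply: (@le_trans _ _ (\sum_(k in grid N) (eps * \prod_(i in G) p i (k i))%:E)%E).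
  by apply: lee_sum => k _; exact: box_le.
rewrite sumEFin lee_fin -mulr_sumr ler_piMr //.
have -> : \sum_(k in grid N) \prod_(i in G) p i (k i) =
    \prod_(i : I) \sum_(j : 'I_N.+1 | (i \in G) || (j == ord0)) (if i \in G then p i j else 1).
  rewrite bigA_distr_big_dep; apply: eq_bigr => k _; rewrite big_mkcond /=.
  by apply: eq_bigr => i _; case: (i \in G).
apply: prodr_ile1 => i _; apply/andP; split.
  by apply: sumr_ge0 => j _; case: ifP => // _; exact/fine_ge0/measure_ge0.
by case: (boolP (i \in G)) => /= iG; [exact: cells_le1|rewrite big_pred1_eq].
Qed.

Hypothesis atomless : forall x, P (X e @^-1` [set x]) = 0%E.
Variable c : I -> R.

Definition lincomb (w : T) : R := X e w + \sum_(f in G) c f * X f w.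

Lemma measurable_lincomb : measurable_fun setT lincomb.
Proof.
apply: measurable_realfun.measurable_funD; first exact: measurable_funPT.
rewrite (_ : (fun w => _) = (fun w => \sum_(f <- index_enum I)
    (if f \in G then c f * X f w else 0))); last by apply/funext => w; rewrite big_mkcond.
apply: measurable_sum => f; case: (f \in G); last exact: measurable_cst.
by apply: measurable_realfun.measurable_funM; [exact: measurable_cst|exact: measurable_funPT].
Qed.

Lemma measurable_lincomb0 : measurable (lincomb @^-1` [set 0]).
Proof. by rewrite -[_ @^-1` _]setTI; exact: measurable_lincomb. Qed.

Lemma prob_lincomb_eq0_bounded_le (M d0 eps : R) : 0 < d0 -> 0 <= eps ->
  (forall a, (P (X e @^-1` `[(a - d0)%R, (a + d0)%R]) <= eps%:E)%E) ->
  (P (lincomb @^-1` [set 0%R] `&`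
      \bigcap_(f in [set f | f \in G]) X f @^-1` `](- M)%R, M[) <= eps%:E)%E.
Proof.
move=> d0_gt0 eps_ge0 small_ball.
pose Cs := \sum_(f in G) `|c f|.
have Cs_ge0 : 0 <= Cs by exact: sumr_ge0.
pose del := d0 / (Cs + 1).
have del_gt0 : 0 < del by apply: divr_gt0 => //; lra.
have Cs_del : Cs * del <= d0 by rewrite /del mulrA ler_pdivrMr; [nra|lra].
pose K := (Num.truncn (M / del)).+1.
have M_lt : M < K%:R * del by rewrite -ltr_pdivrMr // truncnS_gt.
pose N := (K + K)%N.
pose a := - (K%:R * del).
pose cell (j : nat) : set R := [set` `[a + j%:R * del, a + j.+1%:R * del[].
pose ak (k : {ffun I -> 'I_N.+1}) := - \sum_(f in G) c f * (a + (k f)%:R * del).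
pose B k : set R := [set` `[ak k - d0, ak k + d0]].
pose Grid := \big[setU/set0]_(k in grid N)
  \bigcap_(i in [set i | i \in F]) X i @^-1` (if i == e then B k else cell (k i)).
(* Each X f (f in G) lies in a grid cell of width del, so on the zero set X e is
   within Cs * del <= d0 of the value ak k read off the cells. *)
have cover : lincomb @^-1` [set 0] `&` \bigcap_(f in [set f | f \in G]) X f @^-1` `]- M, M[
    `<=` Grid.
  move=> w [/= lincomb0 inside].
  pose k := [ffun i => if i \in G then inord (grid_cell a del (X i w)) else ord0 : 'I_N.+1].
  have on_cell f : f \in G -> a + (k f)%:R * del <= X f w < a + (k f).+1%:R * del.
    move=> fG; have /= := inside f fG; rewrite in_itv /= => /andP[? ?].
    have [|cell_lt ? ?] := @grid_cellP _ a del (X f w) N del_gt0.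
      by rewrite /a natrD mulrDl; apply/andP; split; lra.
    by rewrite ffunE fG inordK ?ltnS 1?ltnW //; apply/andP.
  rewrite /Grid -bigcup_seq_cond; exists k.
    rewrite /= mem_index_enum /=; apply/familyP => i; rewrite ffunE.
    by case: (i \in G); rewrite //= eqxx.
  move=> i /= iF; case: eqP => [->|/eqP ie]; last first.
    have iG : i \in G by rewrite in_setD1 ie.
    by rewrite /cell /= in_itv /=; exact: on_cell.
  have Xe_eq : X e w = - \sum_(f in G) c f * X f w by move: lincomb0; rewrite /lincomb; lra.
  have : `|\sum_(f in G) c f * (a + (k f)%:R * del) - \sum_(f in G) c f * X f w| <= Cs * del.
    apply: sum_mul_dist_le => f /on_cell /andP[? ?].
    by rewrite ler_distlC; apply/andP; split; lra.
  by rewrite /B /ak /= in_itv /= Xe_eq ler_norml => /andP[? ?]; apply/andP; split; lra.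
have mzero : measurable (lincomb @^-1` [set 0] `&`
    \bigcap_(f in [set f | f \in G]) X f @^-1` `]- M, M[).
  apply: measurableI; first exact: measurable_lincomb0.
  apply: fin_bigcap_measurable => [|f _]; first exact: finite_finset.
  by apply: measurable_funPTI; exact: measurable_itv.
have mGrid : measurable Grid.
  apply: bigsetU_measurable => k _; apply: fin_bigcap_measurable => [|i _]; first exact: finite_finset.
  by apply: measurable_funPTI; case: (i == e); exact: measurable_itv.
apply: le_trans (le_measure P (mem_set mzero) (mem_set mGrid) cover) _.
apply: (prob_grid_le eps_ge0) => [j|k|i|k].
- exact: measurable_itv.
- exact: measurable_itv.
- exact: sum_prob_cells_le1.
- exact: small_ball.
Qed.

Lemma prob_lincomb_eq0_le (eps : R) : 0 < eps ->
  (P (lincomb @^-1` [set 0%R]) <= (eps + eps)%:E)%E.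
Proof.
move=> eps_gt0.
have [d0 d0_gt0 small_ball] := prob_interval_unif_small atomless eps_gt0.
pose q := eps / (#|G|%:R + 1).
have q_gt0 : 0 < q by apply: divr_gt0 => //; have := ler0n R #|G|; lra.
have [M _ tails] := prob_tails_small (mem G) X q_gt0.
pose Tail := \big[setU/set0]_(f in G) X f @^-1` (~` `](- M)%R, M[).
pose Bounded := lincomb @^-1` [set 0] `&`
  \bigcap_(f in [set f | f \in G]) X f @^-1` `](- M)%R, M[.
have cover : lincomb @^-1` [set 0] `<=` Tail `|` Bounded.
  move=> w lincomb0.
  have [inside|/existsNP[f /not_implyP[fG out]]] :=
    pselect (forall f, f \in G -> X f w \in `](- M)%R, M[); [right|left].
    by split=> // f; exact: inside.
  by rewrite /Tail -bigcup_seq_cond; exists f; rewrite //= mem_index_enum.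
have PTail : (P Tail <= eps%:E)%E.
  apply: le_trans (prob_bigsetU_le _ _ _ _) _ => [f|].
    by apply: measurable_funPTI; apply: measurableC; exact: measurable_itv.
  apply: (@le_trans _ _ (\sum_(f in G) q%:E)%E); first exact: lee_sum.
  rewrite sumEFin lee_fin sumr_const -mulr_natr /q mulrAC ler_pdivrMr; last first.
    by have := ler0n R #|G|; lra.
  by have := ler0n R #|G|; nra.
have PBounded := prob_lincomb_eq0_bounded_le M d0_gt0 (ltW eps_gt0) small_ball.
have mTail : measurable Tail.
  by apply: bigsetU_measurable => f _; apply: measurable_funPTI; apply: measurableC; exact: measurable_itv.
have mBounded : measurable Bounded.
  apply: measurableI; first exact: measurable_lincomb0.
  apply: fin_bigcap_measurable => [|f _]; first exact: finite_finset.
  by apply: measurable_funPTI; exact: measurable_itv.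
have mU := measurableU _ _ mTail mBounded.
apply: le_trans (le_measure P (mem_set measurable_lincomb0) (mem_set mU) cover) _.
by apply: le_trans (measureU2 P mTail mBounded) _; rewrite EFinD leeD.
Qed.

Lemma prob_lincomb_eq0 : P (lincomb @^-1` [set 0]) = 0%E.
Proof.
apply/eqP; rewrite -measure_le0; apply/lee_addgt0Pr => eps eps_gt0.
by rewrite add0e [eps]splitr; apply: prob_lincomb_eq0_le; rewrite divr_gt0.
Qed.

End IndependentFamily.

Lemma inf_time_tie_negligible (V : finType) (E : {set {set V}}) (s : V)
    d (T : measurableType d) (R : realType) (P : probability T R)
    (tau : {set V} -> {RV P >-> R}) :
  is_tree E -> (forall e, e \in E -> forall x : R, P (tau e @^-1` [set x]) = 0%E) ->
  mutually_independent E tau -> forall a b, a != b ->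
  P.-negligible [set w | inf_time E s (fun e => tau e w) a = inf_time E s (fun e => tau e w) b].
Proof.
move=> tree atomless indep.
suff tie b a : b \notin s :: tpath tree s a -> P.-negligible
    [set w | inf_time E s (fun e => tau e w) a = inf_time E s (fun e => tau e w) b].
  move=> a b ab; case: (tpath_notin_either tree s ab) => [/tie //|/tie].
  by apply: negligibleS => w /= ->.
case/tpath_new_edge => e [eE e_sb e_sa].
pose c f : R := (f \in pedges s (tpath tree s b))%:R - (f \in pedges s (tpath tree s a))%:R.
exists (lincomb E tau e c @^-1` [set 0]); split.
- exact: measurable_lincomb0.
- exact: (prob_lincomb_eq0 indep eE (atomless e eE)).
move=> w /=; rewrite !(inf_time_indicator tree) => tie_w.
have : \sum_(f in E) c f * tau f w = 0.
  by under eq_bigr do rewrite mulrBl; rewrite sumrB tie_w subrr.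
rewrite (bigD1 e) //= /c e_sb (negbTE e_sa) subr0 mul1r => <-.
by rewrite /lincomb; congr (_ + _); apply: eq_bigl => f; rewrite in_setD1 andbC.
Qed.

Theorem theorem1 (V : finType) (E : {set {set V}}) (O : {set V}) (s : V)
  (d : measure_display) (T : measurableType d) (R : realType)
  (P : probability T R) (tau : {set V} -> {RV P >-> R}) :
  is_tree E ->
  O != finset.set0 -> O != [set: V]%SET ->
  s \notin O ->
  (forall e, e \in E -> forall w, 0 <= tau e w) ->
  (forall e, e \in E -> forall x : R, P (tau e @^-1` [set x]) = 0%E) ->
  mutually_independent E tau ->
  {ae P, forall w : T,
    let t := fun e => tau e w in
    exists2 ostar, is_argmin E O s t ostar &
      [/\ forall r, is_class E O r ->
            (feasible E O s t r <-> boundary E O r ostar),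
          exists r, is_class E O r /\ feasible E O s t r &
          star_arrangement E O (fun r => is_class E O r /\ feasible E O s t r)]}.
Proof.
move=> tree O_neq0 _ sO tau_ge0 atomless indep.
pose tie (ab : V * V) := [set w | inf_time E s (fun e => tau e w) ab.1 =
                                  inf_time E s (fun e => tau e w) ab.2].
pose ties := \big[setU/set0]_(ab | [&& ab.1 \in O, ab.2 \in O & ab.1 != ab.2]) tie ab.
have ties_negligible : P.-negligible ties.
  apply: big_ind => [|A B|ab /and3P[_ _ ab_neq]]; first exact: negligible_set0.
    exact: negligibleU.
  exact: inf_time_tie_negligible tree atomless indep _ _ ab_neq.
apply: negligibleS ties_negligible => w /= no_argmin; apply: contrapT => no_tie.
apply: no_argmin; apply: feasible_iff_boundary_argmin => // [e eE|o1 o2 o1O o2O tie_o].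
  exact: tau_ge0.
apply: contrapT => /eqP o_neq; apply: no_tie.
rewrite /ties -bigcup_seq_cond; exists (o1, o2) => //=.
by rewrite mem_index_enum o1O o2O o_neq.
Qed.
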